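(* Let $f$ be a DNF with $k$ terms and let $y\in\{0,1\}^n$ satisfy $f_{>\tau}$ and not $f_{\le\tau}$ ($\tau=1000k$). Fix any permutation $\pi$ and let $z_0,z_1,\dots$ be the sweep process started at $y$. If $(z_i)_a=y_a$ for all $a\in P(y)$, $T$ is a term in $\mathcal{T}_f(z_i)$, and $j\in[n]$ satisfies $(z_i)_j\neq y_j$, then neither $x_j$ nor $\overline{x_j}$ appears in $T$.
   Context: Terms are sets of literals, a DNF is a set of terms; $g_{\le L}$ / $g_{>L}$ are the sub-DNFs of terms of length $\le L$ / $>L$. $\mathcal{T}_f(x)$ is the set of terms of $f$ satisfied by $x$. Protected set $P(y)$: for each term $T\in f$ not satisfied by $y$, take the literal of $T$ with smallest index $i\in[n]$ not satisfied by $y$; $P(y)$ is the set of these indices. Sweep process: given $y$ with $f(y)=1$ and a permutation $\pi$ listing $[n]$ as $\pi(0),\dots,\pi(n-1)$, $z_0=y$, and $z_{i+1}=z_i^{\oplus\pi(i)}$ if $f(z_i^{\oplus\pi(i)})=1$, else $z_{i+1}=z_i$ ($x^{\oplus j}$ is $x$ with bit $j$ flipped). *)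

From mathcomp Require Import all_boot all_fingroup.
Set Implicit Arguments. Unset Strict Implicit. Unset Printing Implicit Defensive.

Definition point (n : nat) := {ffun 'I_n -> bool}.
(* A literal (j, true) is x_j, (j, false) is the negated literal ~x_j. *)
Definition literal (n : nat) := ('I_n * bool)%type.
Definition term (n : nat) := {set literal n}.
Definition dnf (n : nat) := {set term n}.

Definition lit_sat n (x : point n) (l : literal n) : bool := x l.1 == l.2.
Definition term_sat n (x : point n) (T : term n) : bool :=
  [forall l in T, lit_sat x l].
Definition dnf_eval n (f : dnf n) (x : point n) : bool :=
  [exists T in f, term_sat x T].

Definition dnf_le n (g : dnf n) (L : nat) : dnf n := [set T in g | #|T| <= L].
Definition dnf_gt n (g : dnf n) (L : nat) : dnf n := [set T in g | L < #|T|].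

Definition sat_terms n (f : dnf n) (x : point n) : {set term n} :=
  [set T in f | term_sat x T].

Definition flip n (x : point n) (j : 'I_n) : point n :=
  [ffun i => if i == j then ~~ x i else x i].

Definition protected n (f : dnf n) (y : point n) : {set 'I_n} :=
  [set i : 'I_n | [exists T in f, ~~ term_sat y T &&
     [exists b : bool, ((i, b) \in T) && ~~ lit_sat y (i, b)] &&
     [forall i' : 'I_n, [forall b' : bool,
        (((i', b') \in T) && ~~ lit_sat y (i', b')) ==> (i <= i')]]]].

(* Sweep process: z_0 = y, z_{i+1} = z_i^{(+)pi(i)} if f of it is 1, else z_i,
   for i < n (and constant afterwards; only z_0..z_n are meaningful). *)
Fixpoint sweep n (f : dnf n) (y : point n) (pi : 'S_n) (i : nat) : point n :=
  match i with
  | 0 => y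
  | i'.+1 =>
      let z := sweep f y pi i' in
      match insub i' : option 'I_n with
      | Some o => let z' := flip z (pi o) in if dnf_eval f z' then z' else z
      | None => z
      end
  end.

From mathcomp Require Import all_boot all_fingroup.
Set Implicit Arguments. Unset Strict Implicit. Unset Printing Implicit Defensive.

(* Only the protected set matters, not the sweep: if [z] satisfies a term [T]
   of [f] and [z j <> y j], a literal of [T] on [j] is falsified by [y], hence
   so is the literal of [T] with least index falsified by [y]; that index is
   protected, so [z] agrees with [y] there and falsifies it too, which
   contradicts [z] satisfying [T]. *)

Section ProtectedSet.

Variables (n : nat) (f : dnf n) (y : point n).

Definition unsat_var (T : term n) (a : 'I_n) : bool :=
  [exists b : bool, ((a, b) \in T) && ~~ lit_sat y (a, b)].

Lemma least_unsat_var_protected (T : term n) (a : 'I_n) :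
  T \in f -> unsat_var T a ->
  (forall a' : 'I_n, unsat_var T a' -> a <= a') ->
  a \in protected f y.
Proof.
move=> Tf /existsP [b /andP [abT ya]] a_min.
rewrite inE; apply/existsP; exists T; rewrite Tf /=; apply/andP; split.
  apply/andP; split; last by apply/existsP; exists b; rewrite abT.
  by apply/forallP => /(_ (a, b)); rewrite abT (negbTE ya).
apply/forallP => a'; apply/forallP => b'; apply/implyP => a'b'.
by apply: a_min; apply/existsP; exists b'.
Qed.

Lemma protected_unsat_var (T : term n) (j : 'I_n) :
  T \in f -> unsat_var T j ->
  exists2 a, a \in protected f y & unsat_var T a.
Proof.
move=> Tf Tj; case: (arg_minnP (@nat_of_ord n) Tj) => a Ta a_min.
by exists a => //; apply: least_unsat_var_protected Tf Ta _ => a' /a_min.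
Qed.

Lemma sat_term_notin_changed_var (z : point n) (T : term n) (j : 'I_n) (b : bool) :
  {in protected f y, forall a, z a = y a} ->
  T \in sat_terms f z -> z j != y j -> (j, b) \notin T.
Proof.
move=> zy; rewrite inE => /andP [Tf /forallP zT] zj; apply/negP => jbT.
have /eqP /= zjb : lit_sat z (j, b) by have := zT (j, b); rewrite jbT.
have Tj : unsat_var T j.
  by apply/existsP; exists b; rewrite jbT /lit_sat /= -zjb eq_sym.
have [a /zy za /existsP [b' /andP [ab'T ya]]] := protected_unsat_var Tf Tj.
by move: (zT (a, b')) ya; rewrite ab'T /lit_sat /= za => ->.
Qed.

End ProtectedSet.

Theorem corollary4p5 (n k : nat) (f : dnf n) (y : point n) (pi : 'S_n)
    (i : nat) (T : term n) (j : 'I_n) :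
  #|f| = k ->
  dnf_eval (dnf_gt f (1000 * k)) y ->
  ~~ dnf_eval (dnf_le f (1000 * k)) y ->
  i <= n ->
  (forall a : 'I_n, a \in protected f y -> sweep f y pi i a = y a) ->
  T \in sat_terms f (sweep f y pi i) ->
  sweep f y pi i j != y j ->
  (j, true) \notin T /\ (j, false) \notin T.
Proof.
move=> _ _ _ _ zy Tz zj.
by split; apply: sat_term_notin_changed_var zy Tz zj.
Qed.
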